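(* Let $G$ be a profinite group satisfying the maximum condition on closed subgroups. (i) If $H$ is an orbital closed subgroup of $G$, then $\mathrm{i}_G(H)$ is an isolated orbital closed subgroup of $G$; moreover, if $H$ is normal in $G$ then so is $\mathrm{i}_G(H)$. (ii) If $G$ is orbitally sound and $H$ is a closed subgroup of finite index in $G$, then $H$ is orbitally sound.
   Context: A closed subgroup $H$ of a profinite group $G$ is $G$-orbital if $\mathbf{N}_G(H)$ is open in $G$. An orbital closed subgroup $H$ is isolated orbital if for every orbital closed subgroup $H'$ with $H\lneq H'\le G$ we have $[H':H]=\infty$. $G$ is orbitally sound if every isolated orbital closed subgroup of $G$ is normal. For an orbital closed subgroup $H$ of $G$, its isolator $\mathrm{i}_G(H)$ is the closed subgroup generated by all orbital closed subgroups $L$ of $G$ with $H\le L$ and $[L:H]<\infty$. *)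

From Stdlib Require Import List Classical.
Import ListNotations.

Definition subset {T : Type} (A B : T -> Prop) : Prop := forall x, A x -> B x.

Record ProfiniteGroup := {
  carrier :> Type;
  mul : carrier -> carrier -> carrier;
  inv : carrier -> carrier;
  one : carrier;
  mulA : forall x y z, mul x (mul y z) = mul (mul x y) z;
  mul1g : forall x, mul one x = x;
  mulg1 : forall x, mul x one = x;
  mulVg : forall x, mul (inv x) x = one;
  mulgV : forall x, mul x (inv x) = one;
  is_open : (carrier -> Prop) -> Prop;
  open_full : is_open (fun _ => True);
  open_inter : forall U V, is_open U -> is_open V -> is_open (fun x => U x /\ V x);
  open_union : forall (F : (carrier -> Prop) -> Prop),
      (forall U, F U -> is_open U) -> is_open (fun x => exists U, F U /\ U x);
  open_ext : forall U V, (forall x, U x <-> V x) -> is_open U -> is_open V;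
  mul_cont : forall U x y, is_open U -> U (mul x y) ->
      exists V W, is_open V /\ is_open W /\ V x /\ W y /\
        (forall a b, V a -> W b -> U (mul a b));
  inv_cont : forall U, is_open U -> is_open (fun x => U (inv x));
  compact : forall (F : (carrier -> Prop) -> Prop),
      (forall U, F U -> is_open U) -> (forall x, exists U, F U /\ U x) ->
      exists l : list (carrier -> Prop),
        (forall U, In U l -> F U) /\ (forall x, exists U, In U l /\ U x);
  hausdorff : forall x y, x <> y -> exists U V, is_open U /\ is_open V /\ U x /\ V y /\
      (forall z, U z -> V z -> False);
  (* totally disconnected: every connected subset has at most one point *)
  totally_disconnected : forall S : carrier -> Prop,
      (forall U V, is_open U -> is_open V -> subset S (fun x => U x \/ V x) ->
         (forall x, S x -> U x -> V x -> False) ->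
         subset S U \/ subset S V) ->
      forall x y, S x -> S y -> x = y
}.

Arguments mul {p}. Arguments inv {p}. Arguments one {p}. Arguments is_open {p}.

Section Defs.
Variable G : ProfiniteGroup.

Definition full : G -> Prop := fun _ => True.

Definition open_in (A U : G -> Prop) : Prop :=
  subset U A /\ exists V, is_open V /\ forall x, A x -> (U x <-> V x).
Definition closed_in (A C : G -> Prop) : Prop :=
  subset C A /\ open_in A (fun x => A x /\ ~ C x).

Definition is_subgroup (H : G -> Prop) : Prop :=
  H one /\ (forall x y, H x -> H y -> H (mul x y)) /\ (forall x, H x -> H (inv x)).

Definition closed_subgroup_in (A H : G -> Prop) : Prop :=
  is_subgroup H /\ closed_in A H.
Definition closed_subgroup (H : G -> Prop) : Prop := closed_subgroup_in full H.

Definition conj (x g : G) : G := mul (inv g) (mul x g).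

Definition normalizer_in (A H : G -> Prop) : G -> Prop :=
  fun g => A g /\ forall x, H x <-> H (conj x g).

Definition normal_in (A H : G -> Prop) : Prop :=
  forall g x, A g -> H x -> H (conj x g).

(* [L : H] < infinity, for H <= L: finitely many left cosets yH, y in L *)
Definition finite_index (H L : G -> Prop) : Prop :=
  exists l : list G, (forall y, In y l -> L y) /\
    forall x, L x -> exists y, In y l /\ H (mul (inv y) x).

Definition orbital_in (A H : G -> Prop) : Prop :=
  closed_subgroup_in A H /\ open_in A (normalizer_in A H).

Definition isolated_orbital_in (A H : G -> Prop) : Prop :=
  orbital_in A H /\
  forall H', orbital_in A H' -> subset H H' -> (exists x, H' x /\ ~ H x) ->
    ~ finite_index H H'.

Definition orbitally_sound_in (A : G -> Prop) : Prop :=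
  forall H, isolated_orbital_in A H -> normal_in A H.

Definition orbital := orbital_in full.
Definition isolated_orbital := isolated_orbital_in full.
Definition orbitally_sound := orbitally_sound_in full.
Definition normal := normal_in full.

(* closed subgroup generated by all orbital L with H <= L, [L:H] finite *)
Definition isolator (H : G -> Prop) : G -> Prop :=
  fun x => forall K, closed_subgroup K ->
    (forall L, orbital L -> subset H L -> finite_index H L -> subset L K) -> K x.

Definition max_closed_subgroups : Prop :=
  forall C : nat -> G -> Prop,
    (forall n, closed_subgroup (C n)) -> (forall n, subset (C n) (C (S n))) ->
    exists m, forall n, m <= n -> forall x, C n x <-> C m x.

End Defs.
Arguments full {G}.

From Stdlib Require Import List Classical ClassicalEpsilon Lia Arith.
Import ListNotations.

(* (i) Let L1, L2 be orbital closed subgroups containing the orbital subgroup H with finite index.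
   Since N(H) is open, H has only finitely many conjugates under the abstract subgroup D generated
   by L1 and L2, each commensurable with H; their intersection Hc is a closed subgroup of finite index
   in H normalised by D.  Modulo Hc, D is generated by a finite D-invariant set of torsion elements, so
   [D : Hc] is finite by Dietzmann's lemma.  Hence D is closed (a finite union of cosets of Hc),
   orbital, and contains H with finite index.  The family of such overgroups is thus directed; by the
   maximum condition it has a maximal member, which therefore contains all the others and is the
   isolator of H.
   (ii) Let K be isolated orbital in the open subgroup Hs.  Then K is orbital in G, its isolator I
   in G is isolated orbital, hence normal, and I meets Hs in an orbital subgroup of Hs containing K
   with finite index.  Isolation of K in Hs forces this intersection to be K, so K is normal in Hs. *)

Section ProfiniteGroupTheory.
Variable G : ProfiniteGroup.
Implicit Types (x y z g : G) (A B C D H K L N U V : G -> Prop).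

Local Notation "x ** y" := (@mul G x y) (at level 40, left associativity).
Local Notation "x ^c g" := (conj G x g) (at level 30).

Lemma mulKg x y : inv x ** (x ** y) = y.
Proof. rewrite mulA, mulVg, mul1g; reflexivity. Qed.
Lemma mulKVg x y : x ** (inv x ** y) = y.
Proof. rewrite mulA, mulgV, mul1g; reflexivity. Qed.
Lemma mulgK x y : y ** x ** inv x = y.
Proof. rewrite <- mulA, mulgV, mulg1; reflexivity. Qed.
Lemma mulgKV x y : y ** inv x ** x = y.
Proof. rewrite <- mulA, mulVg, mulg1; reflexivity. Qed.
Lemma invg_unique x y : x ** y = one -> y = inv x.
Proof. intro h. rewrite <- (mulKg x y), h, mulg1. reflexivity. Qed.
Lemma invgK x : inv (inv x) = x.
Proof. symmetry. apply invg_unique, mulVg. Qed.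
Lemma invMg x y : inv (x ** y) = inv y ** inv x.
Proof.
  symmetry. apply invg_unique.
  rewrite mulA, <- (mulA _ x y), mulgV, mulg1, mulgV. reflexivity.
Qed.
Lemma invg1 : inv (@one G) = one.
Proof. symmetry; apply invg_unique, mulg1. Qed.

Lemma conjMg x y g : (x ** y) ^c g = x ^c g ** y ^c g.
Proof. unfold conj. rewrite <- !mulA, mulKVg. reflexivity. Qed.
Lemma conjgM x g h : x ^c (g ** h) = (x ^c g) ^c h.
Proof. unfold conj. rewrite invMg, <- !mulA. reflexivity. Qed.
Lemma conjg1 x : x ^c one = x.
Proof. unfold conj. rewrite invg1, mul1g, mulg1. reflexivity. Qed.
Lemma conj1g g : one ^c g = one.
Proof. unfold conj. rewrite mul1g, mulVg. reflexivity. Qed.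
Lemma conjVg x g : inv x ^c g = inv (x ^c g).
Proof. unfold conj. rewrite !invMg, invgK, <- !mulA. reflexivity. Qed.
Lemma conjgK x g : (x ^c g) ^c inv g = x.
Proof. rewrite <- conjgM, mulgV, conjg1. reflexivity. Qed.
Lemma conjgKV x g : (x ^c inv g) ^c g = x.
Proof. rewrite <- conjgM, mulVg, conjg1. reflexivity. Qed.

Fixpoint pow x (n : nat) : G :=
  match n with 0 => one | S n => x ** pow x n end.
Definition prod (w : list G) : G := fold_right (@mul G) one w.

Lemma pow_add x a b : pow x (a + b) = pow x a ** pow x b.
Proof. induction a; simpl. now rewrite mul1g. now rewrite IHa, mulA. Qed.
Lemma pow_mul x a b : pow x (a * b) = pow (pow x a) b.
Proof.
  induction b; simpl. now rewrite Nat.mul_0_r.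
  rewrite Nat.mul_succ_r, Nat.add_comm, pow_add, IHb. reflexivity.
Qed.
Lemma prod_cons x w : prod (x :: w) = x ** prod w.
Proof. reflexivity. Qed.
Lemma prod_app u v : prod (u ++ v) = prod u ** prod v.
Proof.
  induction u as [|a u IH]. symmetry; apply mul1g.
  change (a ** prod (u ++ v) = a ** prod u ** prod v). rewrite IH. apply mulA.
Qed.
Lemma prod_conj w g : prod (map (fun s => s ^c g) w) = prod w ^c g.
Proof.
  induction w as [|a w IH]. symmetry; apply conj1g.
  change (a ^c g ** prod (map (fun s => s ^c g) w) = (a ** prod w) ^c g).
  rewrite IH, conjMg. reflexivity.
Qed.
Lemma invg_prod w : inv (prod w) = prod (rev (map inv w)).
Proof.
  induction w as [|a w IH]. apply invg1.
  cbn [map rev]. rewrite prod_app, <- IH, prod_cons, invMg.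
  change (prod [inv a]) with (inv a ** one). now rewrite mulg1.
Qed.

Lemma group1 H : is_subgroup G H -> H one.
Proof. intros [h _]; exact h. Qed.
Lemma groupM H x y : is_subgroup G H -> H x -> H y -> H (x ** y).
Proof. intros [_ [h _]]; auto. Qed.
Lemma groupV H x : is_subgroup G H -> H x -> H (inv x).
Proof. intros [_ [_ h]]; auto. Qed.
Lemma groupJ H x g : is_subgroup G H -> H x -> H g -> H (x ^c g).
Proof. intros sH hx hg. apply (groupM H); [exact sH | now apply groupV | now apply (groupM H)]. Qed.
Lemma group_pow H x n : is_subgroup G H -> H x -> H (pow x n).
Proof. intros sH hx; induction n; simpl. now apply group1. now apply groupM. Qed.
Lemma group_prod H w : is_subgroup G H -> (forall y, In y w -> H y) -> H (prod w).
Proof.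
  intros sH; induction w as [|a w IH]; intro hw. exact (group1 H sH).
  change (H (a ** prod w)). apply (groupM H); auto using in_eq, in_cons.
Qed.

Lemma subgroup_eq A B : (forall x, A x <-> B x) -> is_subgroup G A -> is_subgroup G B.
Proof.
  intros e [a [b c]]. repeat split.
  - apply e, a.
  - intros x y hx hy. apply e, b; apply e; auto.
  - intros x hx. apply e, c, e, hx.
Qed.
Lemma subgroup_meet A B :
  is_subgroup G A -> is_subgroup G B -> is_subgroup G (fun x => A x /\ B x).
Proof. intros sA sB. repeat split; try apply group1; try apply groupM; try apply groupV; tauto. Qed.

Definition lcoset_eq N x y := N (inv x ** y).

Lemma lcoset_eq_refl N x : is_subgroup G N -> lcoset_eq N x x.
Proof. intro sN. unfold lcoset_eq. rewrite mulVg. now apply group1. Qed.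
Lemma lcoset_eq_sym N x y : is_subgroup G N -> lcoset_eq N x y -> lcoset_eq N y x.
Proof.
  unfold lcoset_eq. intros sN h.
  replace (inv y ** x) with (inv (inv x ** y)) by now rewrite invMg, invgK.
  now apply groupV.
Qed.
Lemma lcoset_eq_trans N x y z :
  is_subgroup G N -> lcoset_eq N x y -> lcoset_eq N y z -> lcoset_eq N x z.
Proof.
  unfold lcoset_eq. intros sN h1 h2.
  replace (inv x ** z) with ((inv x ** y) ** (inv y ** z)) by now rewrite <- mulA, mulKVg.
  now apply groupM.
Qed.

Definition conjset A g : G -> Prop := fun x => A (x ^c inv g).

Lemma conjset_subgroup A g : is_subgroup G A -> is_subgroup G (conjset A g).
Proof.
  intros sA. unfold conjset. repeat split.
  - rewrite conj1g; now apply group1.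
  - intros x y hx hy. rewrite conjMg; now apply groupM.
  - intros x hx. rewrite conjVg; now apply groupV.
Qed.
Lemma conjsetM A g h x : conjset (conjset A g) h x <-> conjset A (g ** h) x.
Proof. unfold conjset. rewrite <- conjgM, invMg. tauto. Qed.
Lemma conjset1 A x : conjset A one x <-> A x.
Proof. unfold conjset. rewrite invg1, conjg1. tauto. Qed.
Lemma mem_conjset A g x : conjset A g (x ^c g) <-> A x.
Proof. unfold conjset. rewrite conjgK. tauto. Qed.

Definition normaliser A := normalizer_in G full A.

Lemma normaliser_subgroup A : is_subgroup G (normaliser A).
Proof.
  unfold normaliser, normalizer_in. split; [|split].
  - split. exact I. intro z. rewrite conjg1. tauto.
  - intros x y [_ hx] [_ hy]. split. exact I. intro z. rewrite conjgM, <- hy, <- hx. tauto.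
  - intros x [_ hx]. split. exact I. intro z. rewrite (hx (z ^c inv x)), conjgKV. tauto.
Qed.
Lemma conjset_normaliser A n x : normaliser A n -> conjset A n x <-> A x.
Proof.
  intros hn. destruct (groupV _ _ (normaliser_subgroup A) hn) as [_ h].
  unfold conjset. rewrite <- h. tauto.
Qed.
Lemma normaliser_self L s : is_subgroup G L -> L s -> normaliser L s.
Proof.
  intros sL hs. split. exact I. intro x. split; intro hx.
  - now apply (groupJ L).
  - rewrite <- (conjgK x s). apply (groupJ L); auto. now apply (groupV L).
Qed.


Lemma finite_index_eq_r A B B' :
  (forall x, B x <-> B' x) -> finite_index G A B -> finite_index G A B'.
Proof. intros e [l [h1 h2]]. exists l. split; intros x hx; [apply e, h1 | apply h2, e]; auto. Qed.
Lemma finite_index_sub_l A A' B :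
  (forall x, A x -> A' x) -> finite_index G A B -> finite_index G A' B.
Proof.
  intros e [l [h1 h2]]. exists l. split; auto.
  intros x hx. destruct (h2 x hx) as [y [? ?]]. eauto.
Qed.
Lemma finite_index_refl A : is_subgroup G A -> finite_index G A A.
Proof.
  intros sA. exists [one]. split.
  - intros y [<-|[]]. now apply group1.
  - intros x hx. exists one. split. now left. now rewrite invg1, mul1g.
Qed.

Lemma list_choice {T : Type} (l : list T) (Q : T -> G -> Prop) :
  exists l' : list G, (forall z, In z l' -> exists t, In t l /\ Q t z) /\
     forall t, In t l -> (exists z, Q t z) -> exists z, In z l' /\ Q t z.
Proof.
  induction l as [|a l [l' [h1 h2]]].
  - exists []. split; intros _ [].
  - destruct (classic (exists z, Q a z)) as [[z hz]|hn].
    + exists (z :: l'). split.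
      * intros z' [<-|h]. exists a; split; auto; now left.
        destruct (h1 z' h) as [t [? ?]]. exists t; split; auto; now right.
      * intros t [<-|ht] he. exists z; split; auto; now left.
        destruct (h2 t ht he) as [z' [? ?]]. exists z'; split; auto; now right.
    + exists l'. split.
      * intros z' h. destruct (h1 z' h) as [t [? ?]]. exists t; split; auto; now right.
      * intros t [<-|ht] he. contradiction. auto.
Qed.

Lemma finite_index_restrict K C A : is_subgroup G K -> is_subgroup G A ->
  finite_index G K C -> (forall x, A x -> C x) -> finite_index G (fun x => K x /\ A x) A.
Proof.
  intros sK sA [l [_ hl]] hAC.
  destruct (list_choice l (fun y a => A a /\ lcoset_eq K y a)) as [l' [h1 h2]].
  exists l'. split.
  - intros z hz. destruct (h1 z hz) as [t [_ [? _]]]; auto.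
  - intros x hx. destruct (hl x (hAC x hx)) as [y [hy hk]].
    destruct (h2 y hy) as [z [hz [hAz hKz]]]. exists x; auto.
    exists z. split; auto. split.
    + apply (lcoset_eq_trans K z y x); auto. now apply lcoset_eq_sym.
    + apply (groupM A); auto. now apply (groupV A).
Qed.

Lemma finite_index_meet A B C : is_subgroup G A -> is_subgroup G B ->
  finite_index G A C -> finite_index G B C -> finite_index G (fun x => A x /\ B x) C.
Proof.
  intros sA sB [l1 [_ h1]] [l2 [_ h2]].
  destruct (list_choice (list_prod l1 l2)
    (fun p c => C c /\ lcoset_eq A (fst p) c /\ lcoset_eq B (snd p) c)) as [l' [k1 k2]].
  exists l'. split.
  - intros z hz. destruct (k1 z hz) as [t [_ [? _]]]; auto.
  - intros x hx. destruct (h1 x hx) as [y [hy ha]]. destruct (h2 x hx) as [y' [hy' hb]].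
    destruct (k2 (y, y')) as [z [hz [hCz [hAz hBz]]]];
      [now apply in_prod | exists x; simpl; auto |].
    exists z. simpl in *. split; auto.
    split; [apply (lcoset_eq_trans A z y x) | apply (lcoset_eq_trans B z y' x)];
      auto using lcoset_eq_sym.
Qed.

Lemma finite_index_trans A B C : is_subgroup G C -> (forall x, B x -> C x) ->
  finite_index G A B -> finite_index G B C -> finite_index G A C.
Proof.
  intros sC hBC [l2 [k2 h2]] [l1 [k1 h1]].
  exists (flat_map (fun y => map (fun z => y ** z) l2) l1). split.
  - intros w hw. apply in_flat_map in hw as [y [hy hw]].
    apply in_map_iff in hw as [z [<- hz]]. apply (groupM C); auto.
  - intros x hx. destruct (h1 x hx) as [y [hy hb]]. destruct (h2 _ hb) as [z [hz ha]].
    exists (y ** z). split.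
    + apply in_flat_map. exists y; split; auto. apply in_map_iff; eauto.
    + rewrite invMg, <- mulA. exact ha.
Qed.

Lemma finite_index_conjset A B g :
  finite_index G A B -> finite_index G (conjset A g) (conjset B g).
Proof.
  intros [l [k h]]. exists (map (fun y => y ^c g) l). split.
  - intros w hw. apply in_map_iff in hw as [y [<- hy]]. apply mem_conjset. auto.
  - intros x hx. destruct (h _ hx) as [y [hy ha]]. exists (y ^c g). split.
    + apply in_map_iff; eauto.
    + unfold conjset. rewrite conjMg, conjVg, conjgK. exact ha.
Qed.

Lemma finite_index_meet_trans A B C : is_subgroup G A -> is_subgroup G B ->
  is_subgroup G C -> finite_index G (fun x => A x /\ B x) A ->
  finite_index G (fun x => B x /\ C x) B -> finite_index G (fun x => A x /\ C x) A.
Proof.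
  intros sA sB sC h1 h2.
  assert (h3 : finite_index G (fun x => (B x /\ C x) /\ (A x /\ B x)) (fun x => A x /\ B x)).
  { apply finite_index_restrict with B; auto using subgroup_meet. now intros x []. }
  assert (h4 : finite_index G (fun x => (B x /\ C x) /\ (A x /\ B x)) A).
  { apply finite_index_trans with (fun x => A x /\ B x); auto. now intros x []. }
  eapply finite_index_sub_l; [|exact h4]. simpl. tauto.
Qed.

Lemma finite_index_meet_list H (f : G -> G -> Prop) (ds : list G) : is_subgroup G H ->
  (forall d, In d ds -> is_subgroup G (f d)) ->
  (forall d, In d ds -> finite_index G (fun x => H x /\ f d x) H) ->
  finite_index G (fun x => H x /\ forall d, In d ds -> f d x) H.
Proof.
  intro sH. induction ds as [|a ds IH]; intros hs hf.
  - eapply finite_index_sub_l; [|exact (finite_index_refl H sH)].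
    intros x hx. split; auto. intros _ [].
  - assert (s1 : is_subgroup G (fun x => H x /\ forall d, In d ds -> f d x)).
    { apply subgroup_meet; auto. repeat split.
      - intros d hd. apply group1, hs. now right.
      - intros x y hx hy d hd. apply groupM; auto. apply hs; now right.
      - intros x hx d hd. apply groupV; auto. apply hs; now right. }
    assert (h := finite_index_meet _ _ H (subgroup_meet _ _ sH (hs a (in_eq a ds))) s1
      (hf a (in_eq a ds)) (IH (fun d h => hs d (in_cons a d ds h))
                              (fun d h => hf d (in_cons a d ds h)))).
    eapply finite_index_sub_l; [|exact h].
    intros x [[hx ha] [_ hr]]. split; auto. intros d [<-|hd]; auto.
Qed.

Lemma finite_index_union N (Cs : list (G -> Prop)) :
  (forall C, In C Cs -> finite_index G N C) ->
  exists X, (forall x, In x X -> exists C, In C Cs /\ C x) /\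
    forall C y, In C Cs -> C y -> exists x, In x X /\ lcoset_eq N x y.
Proof.
  induction Cs as [|C0 Cs IH]; intro hfi.
  - exists []. split. intros _ []. intros _ _ [].
  - destruct (hfi C0 (in_eq C0 Cs)) as [l [hl1 hl2]].
    destruct IH as [X [hX1 hX2]]. { intros C hC. apply hfi. now right. }
    exists (l ++ X). split.
    + intros x hx. apply in_app_or in hx as [hx|hx].
      * exists C0. split. now left. auto.
      * destruct (hX1 x hx) as [C [? ?]]. exists C. split; auto. now right.
    + intros C y [<-|hC] hy.
      * destruct (hl2 y hy) as [x [? ?]]. exists x. split; auto. apply in_or_app; auto.
      * destruct (hX2 C y hC hy) as [x [? ?]]. exists x. split; auto. apply in_or_app; auto.
Qed.

Lemma NoDup_map_seq {T : Type} (f : nat -> T) n :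
  (forall i j, i < j < n -> f i <> f j) -> NoDup (map f (seq 0 n)).
Proof.
  revert f. induction n; intros f hf; simpl; constructor.
  - rewrite <- seq_shift, map_map. intro hin. apply in_map_iff in hin as [i [e hi]].
    apply in_seq in hi. apply (hf 0 (S i)). lia. auto.
  - rewrite <- seq_shift, map_map. apply IHn. intros i j hij. apply hf. lia.
Qed.

(* Pigeonhole: two of the powers x^0, ..., x^|l| lie in the same coset. *)
Lemma finite_index_power N A x : is_subgroup G N -> is_subgroup G A ->
  finite_index G N A -> A x -> exists k, 0 < k /\ N (pow x k).
Proof.
  intros sN sA [l [_ h]] hx.
  set (r := fun i => epsilon (inhabits (@one G)) (fun y => In y l /\ lcoset_eq N y (pow x i))).
  assert (hr : forall i, In (r i) l /\ lcoset_eq N (r i) (pow x i)).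
  { intro i. apply (epsilon_spec (inhabits one) (fun y => In y l /\ lcoset_eq N y (pow x i))).
    apply h. now apply group_pow. }
  destruct (classic (exists i j, i < j < S (length l) /\ r i = r j)) as [[i [j [hij e]]]|hn].
  - exists (j - i). split. lia.
    assert (hi := lcoset_eq_sym _ _ _ sN (proj2 (hr i))). rewrite e in hi.
    assert (hij' := lcoset_eq_trans _ _ _ _ sN hi (proj2 (hr j))).
    unfold lcoset_eq in hij'.
    replace (pow x j) with (pow x i ** pow x (j - i)) in hij' by (rewrite <- pow_add; f_equal; lia).
    now rewrite mulKg in hij'.
  - exfalso. assert (hle : length (map r (seq 0 (S (length l)))) <= length l).
    { apply NoDup_incl_length.
      - apply NoDup_map_seq. intros i j hij e. apply hn. eauto.
      - intros y hy. apply in_map_iff in hy as [i [<- _]]. apply hr. }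
    rewrite length_map, length_seq in hle. lia.
Qed.


Lemma open_eq {U V} : is_open U -> (forall x, U x <-> V x) -> is_open V.
Proof. intros h e. exact (open_ext _ U V e h). Qed.

Lemma open_in_fullE U : open_in G full U <-> is_open U.
Proof.
  split.
  - intros [_ [V [hV e]]]. apply (open_eq (U := V)); auto. intro x. symmetry. apply e. exact I.
  - intro h. split. intros x _; exact I. exists U. split; auto. tauto.
Qed.

Definition is_closed A := is_open (fun x => ~ A x).

Lemma closed_subgroupE H : closed_subgroup G H <-> is_subgroup G H /\ is_closed H.
Proof.
  unfold closed_subgroup, closed_subgroup_in, closed_in, is_closed. split.
  - intros [s [_ h]]. split; auto. apply open_in_fullE in h. apply (open_eq h). unfold full. tauto.
  - intros [s h]. split; auto. split. intros x _; exact I.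
    apply open_in_fullE. apply (open_eq h). unfold full; tauto.
Qed.

Lemma open_local A :
  (forall x, A x -> exists U, is_open U /\ U x /\ forall y, U y -> A y) -> is_open A.
Proof.
  intro h. apply (open_eq (U := fun x => exists U, (is_open U /\ forall y, U y -> A y) /\ U x)).
  - apply open_union. now intros U [? _].
  - intro x. split.
    + intros [U [[_ hU] hx]]. auto.
    + intro hx. destruct (h x hx) as [U [? [? ?]]]. exists U. auto.
Qed.

Lemma open_lmul U a : is_open U -> is_open (fun x => U (a ** x)).
Proof.
  intro hU. apply open_local. intros x hx.
  destruct (mul_cont _ U a x hU hx) as [V [W [_ [hW [ha [hw h]]]]]]. eauto.
Qed.
Lemma open_rmul U a : is_open U -> is_open (fun x => U (x ** a)).
Proof.
  intro hU. apply open_local. intros x hx.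
  destruct (mul_cont _ U x a hU hx) as [V [W [hV [_ [hx' [ha h]]]]]]. eauto.
Qed.
Lemma open_conj U g : is_open U -> is_open (fun x => U (x ^c g)).
Proof. intro hU. exact (open_rmul (fun y => U (inv g ** y)) g (open_lmul U (inv g) hU)). Qed.

Lemma open_subgroup_nbhd A U :
  is_subgroup G A -> is_open U -> U one -> (forall x, U x -> A x) -> is_open A.
Proof.
  intros sA hU h1 hUA. apply open_local. intros x hx.
  exists (fun y => U (inv x ** y)). split. now apply open_lmul.
  split. now rewrite mulVg. intros y hy. rewrite <- (mulKVg x y). apply (groupM A); auto.
Qed.

Lemma open_meet_list {T : Type} (l : list T) (f : T -> G -> Prop) :
  (forall t, In t l -> is_open (f t)) -> is_open (fun x => forall t, In t l -> f t x).
Proof.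
  induction l as [|a l IH]; intro h.
  - apply (open_eq (open_full _)). intro x; split; auto. intros _ _ [].
  - apply (open_eq (open_inter _ _ _ (h a (in_eq a l)) (IH (fun t ht => h t (in_cons a t l ht))))).
    intro x. split.
    + intros [h1 h2] t [<-|ht]; auto.
    + intro k. split; auto using in_eq, in_cons.
Qed.

Lemma open_join U V : is_open U -> is_open V -> is_open (fun x => U x \/ V x).
Proof.
  intros hU hV. apply (open_eq (U := fun x => exists W, (W = U \/ W = V) /\ W x)).
  - apply open_union. now intros W [->| ->].
  - intro x. split.
    + now intros [W [[->| ->] h]]; [left|right].
    + intros [h|h]; eauto.
Qed.

Lemma closed_conjset A g : is_closed A -> is_closed (conjset A g).
Proof. intro h. exact (open_conj _ (inv g) h). Qed.

Lemma closed_meet {I : Type} (P : I -> Prop) (F : I -> G -> Prop) :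
  (forall i, P i -> is_closed (F i)) -> is_closed (fun x => forall i, P i -> F i x).
Proof.
  intro h. apply (open_eq (U := fun x => exists W, (exists i, P i /\ W = fun y => ~ F i y) /\ W x)).
  - apply open_union. intros W [i [hi ->]]. exact (h i hi).
  - intro x. split.
    + intros [W [[i [hi ->]] hx]] hall. auto.
    + intro hn. apply NNPP. intro hn2. apply hn. intros i hi. apply NNPP. intro hf.
      apply hn2. exists (fun y => ~ F i y). eauto.
Qed.

Lemma closed_cosets A (l : list G) :
  is_closed A -> is_closed (fun x => exists y, In y l /\ lcoset_eq A y x).
Proof.
  intro h. apply (open_eq (U := fun x => forall y, In y l -> ~ A (inv y ** x))).
  - apply open_meet_list. intros y _. exact (open_lmul _ (inv y) h).
  - intro x. split.
    + intros hall [y [hy ha]]. exact (hall y hy ha).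
    + intros hn y hy ha. eauto.
Qed.

(* Compactness: the open cosets of A cover G, so finitely many of them do. *)
Lemma open_subgroup_finite_index A : is_subgroup G A -> is_open A -> finite_index G A full.
Proof.
  intros sA hA.
  destruct (compact _ (fun U => exists y, U = lcoset_eq A y)) as [l [hl1 hl2]].
  - intros U [y ->]. now apply open_lmul.
  - intro x. exists (lcoset_eq A x). split. eauto. now apply lcoset_eq_refl.
  - destruct (list_choice l (fun U y => U = lcoset_eq A y)) as [ys [_ hys]].
    exists ys. split. intros; exact I.
    intros x _. destruct (hl2 x) as [U [hU hx]]. destruct (hys U hU (hl1 U hU)) as [y [hy ->]]. eauto.
Qed.

(* The complement is a finite union of closed cosets. *)
Lemma closed_finite_index_open A :
  is_subgroup G A -> is_closed A -> finite_index G A full -> is_open A.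
Proof.
  intros sA hA [l [_ hl]].
  apply (open_eq (U := fun x => forall y, In y l -> ~ A y -> ~ A (inv y ** x))).
  - apply open_meet_list. intros y _. destruct (classic (A y)) as [ay|ay].
    + apply (open_eq (open_full _)). intro x. tauto.
    + apply (open_eq (open_lmul _ (inv y) hA)). intro x. tauto.
  - intro x. split.
    + intro h. destruct (hl x I) as [y [hy ha]]. destruct (classic (A y)) as [ay|ay].
      * rewrite <- (mulKVg y x). now apply (groupM A).
      * exfalso. exact (h y hy ay ha).
    + intros hx y hy hny ha. apply hny.
      replace y with (x ** inv (inv y ** x)) by now rewrite invMg, invgK, mulA, mulgV, mul1g.
      apply (groupM A); auto. now apply (groupV A).
Qed.

Lemma orbitalE L :
  orbital G L <-> is_subgroup G L /\ is_closed L /\ is_open (normaliser L).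
Proof.
  unfold orbital, orbital_in. rewrite open_in_fullE.
  fold (closed_subgroup G L). rewrite closed_subgroupE. unfold normaliser. tauto.
Qed.


Definition gen S : G -> Prop := fun x => exists w, (forall y, In y w -> S y) /\ x = prod w.

Lemma mem_gen S s : S s -> gen S s.
Proof. intro hs. exists [s]. split. now intros y [<-|[]]. symmetry. apply mulg1. Qed.

Lemma gen_subgroup S : (forall s, S s -> S (inv s)) -> is_subgroup G (gen S).
Proof.
  intro hS. split; [|split].
  - exists []. split. intros _ []. reflexivity.
  - intros x y [w1 [h1 ->]] [w2 [h2 ->]]. exists (w1 ++ w2). split.
    + intros z hz. apply in_app_or in hz as [hz|hz]; auto.
    + now rewrite prod_app.
  - intros x [w [h ->]]. exists (rev (map inv w)). split.
    + intros z hz. apply in_rev, in_map_iff in hz as [s [<- hs]]. auto.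
    + apply invg_prod.
Qed.

Lemma gen_conj S n : (forall s, S s -> S (s ^c n)) -> forall x, gen S x -> gen S (x ^c n).
Proof.
  intros hS x [w [hw ->]]. exists (map (fun s => s ^c n) w). split.
  - intros y hy. apply in_map_iff in hy as [s [<- hs]]. auto.
  - symmetry. apply prod_conj.
Qed.

Lemma lcoset_eq_mul N a b a' b' : is_subgroup G N -> (forall x, N x -> N (x ^c b)) ->
  lcoset_eq N a a' -> lcoset_eq N b b' -> lcoset_eq N (a ** b) (a' ** b').
Proof.
  unfold lcoset_eq. intros sN hb h1 h2.
  replace (inv (a ** b) ** (a' ** b')) with ((inv a ** a') ^c b ** (inv b ** b')).
  - apply (groupM N); auto.
  - unfold conj. rewrite invMg, <- !mulA, mulKVg. reflexivity.
Qed.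

Definition carrier_eq_dec x y : {x = y} + {x <> y} := excluded_middle_informative (x = y).

Definition total_count (X w : list G) : nat :=
  fold_right (fun x acc => count_occ carrier_eq_dec w x + acc) 0 X.

Lemma total_count_cons X w y :
  total_count X (y :: w) = total_count X w + count_occ carrier_eq_dec X y.
Proof.
  induction X as [|a X IH]. reflexivity.
  unfold total_count in *. cbn [fold_right]. rewrite IH. cbn [count_occ].
  destruct (carrier_eq_dec y a), (carrier_eq_dec a y); subst; try congruence; lia.
Qed.

Lemma length_le_total_count X w : (forall y, In y w -> In y X) -> length w <= total_count X w.
Proof.
  induction w as [|y w IH]; intro h; simpl. lia. rewrite total_count_cons.
  assert (count_occ carrier_eq_dec X y > 0) by (apply count_occ_In, h, in_eq).
  assert (length w <= total_count X w) by (apply IH; intros; apply h; now right). lia.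
Qed.

Lemma total_count_le X w k :
  (forall x, In x X -> count_occ carrier_eq_dec w x <= k) -> total_count X w <= length X * k.
Proof.
  induction X as [|a X IH]; intro h; simpl. lia. unfold total_count in *; simpl.
  assert (count_occ carrier_eq_dec w a <= k) by (apply h, in_eq).
  assert (IH' := IH (fun x hx => h x (in_cons a x X hx))). lia.
Qed.

Fixpoint words (X : list G) (n : nat) : list (list G) :=
  match n with
  | 0 => [[]]
  | S n => flat_map (fun x => map (cons x) (words X n)) X
  end.

Lemma in_words X w : (forall y, In y w -> In y X) -> In w (words X (length w)).
Proof.
  induction w as [|y w IH]; intro h; simpl. now left.
  apply in_flat_map. exists y. split. apply h, in_eq.
  apply in_map, IH. intros; apply h; now right.
Qed.

Lemma words_letters X n w : In w (words X n) -> forall y, In y w -> In y X.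
Proof.
  revert w. induction n; simpl; intros w hw.
  - destruct hw as [<-|[]]. intros _ [].
  - apply in_flat_map in hw as [x [hx hw]]. apply in_map_iff in hw as [w' [<- hw']].
    intros y [<-|hy]; eauto.
Qed.

Lemma uniform_exponent N (X : list G) : is_subgroup G N ->
  (forall x, In x X -> exists k, 0 < k /\ N (pow x k)) ->
  exists k, 0 < k /\ forall x, In x X -> N (pow x k).
Proof.
  intros sN. induction X as [|a X IH]; intro h.
  - exists 1. split. lia. intros _ [].
  - destruct (h a (in_eq a X)) as [k [hk ha]].
    destruct IH as [K [hK hX]]. { intros; apply h; now right. }
    exists (k * K). split. nia. intros x [<-|hx].
    + rewrite pow_mul. now apply (group_pow N).
    + rewrite Nat.mul_comm, pow_mul. apply (group_pow N); auto.
Qed.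

Section Dietzmann.
Variables (N S : G -> Prop) (X : list G).
Hypothesis N_subgroup : is_subgroup G N.
Hypothesis S_inv : forall s, S s -> S (inv s).
Hypothesis N_normal : forall g x, gen S g -> N x -> N (x ^c g).
Hypothesis X_gen : forall x, In x X -> gen S x.
Hypothesis X_conj : forall x g, In x X -> gen S g -> exists x', In x' X /\ lcoset_eq N x' (x ^c g).
Hypothesis X_torsion : forall x, In x X -> exists k, 0 < k /\ N (pow x k).
Hypothesis S_reps : forall s, S s -> exists x, In x X /\ lcoset_eq N x s.

Let D_subgroup := gen_subgroup S S_inv.
Let word (w : list G) := forall y, In y w -> In y X.

Lemma word_gen w : word w -> gen S (prod w).
Proof. intro hw. apply group_prod; auto. Qed.

(* Occurrences of x are moved to the front; the letters they pass are replaced by conjugates,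
   which X represents modulo N. *)
Lemma collect_letter w x j : word w -> In x X -> j <= count_occ carrier_eq_dec w x ->
  exists r, word r /\ length r + j = length w /\ lcoset_eq N (prod w) (pow x j ** prod r).
Proof.
  revert j. induction w as [|y w IH]; intros j hw hx hj.
  - simpl in hj. replace j with 0 by lia. exists []. split. intros _ [].
    split. reflexivity. simpl. rewrite mul1g. now apply lcoset_eq_refl.
  - assert (hw' : word w) by (intros z hz; apply hw; now right).
    assert (hy : In y X) by apply hw, in_eq.
    assert (econg : forall a b a' b', gen S b -> lcoset_eq N a a' -> lcoset_eq N b b' ->
              lcoset_eq N (a ** b) (a' ** b')) by (intros; apply lcoset_eq_mul; auto).
    simpl in hj. destruct (carrier_eq_dec y x) as [<-|ne].
    + destruct j as [|j].
      * exists (y :: w). split; auto. split. simpl; lia. simpl. rewrite mul1g. now apply lcoset_eq_refl.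
      * destruct (IH j hw' hy ltac:(lia)) as [r [hr [hl he]]]. exists r. split; auto. split. simpl; lia.
        rewrite prod_cons. simpl. rewrite <- mulA. apply econg; auto using word_gen, lcoset_eq_refl.
    + destruct (IH j hw' hx hj) as [r [hr [hl he]]].
      assert (hxj : gen S (pow x j)) by (apply group_pow; auto).
      destruct (X_conj y (pow x j) hy hxj) as [y' [hy' hN]].
      exists (y' :: r). split. intros z [<-|hz]; auto. split. simpl; lia.
      rewrite prod_cons. apply (lcoset_eq_trans _ _ (y ** (pow x j ** prod r))); auto.
      { apply econg; auto using word_gen, lcoset_eq_refl. }
      replace (y ** (pow x j ** prod r)) with (pow x j ** (y ^c pow x j ** prod r))
        by (unfold conj; rewrite mulA, mulKVg, <- mulA; reflexivity).
      apply econg; auto using lcoset_eq_refl.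
      * apply (groupM (gen S)); auto using word_gen. apply (groupJ (gen S)); auto.
      * apply econg; auto using word_gen, lcoset_eq_refl. now apply lcoset_eq_sym.
Qed.

(* A word longer than |X| k contains some letter k times, and x^k lies in the normal subgroup N. *)
Lemma shorten_word k : 0 < k -> (forall x, In x X -> N (pow x k)) ->
  forall n w, word w -> length w <= n ->
  exists w', word w' /\ length w' <= length X * k /\ lcoset_eq N (prod w) (prod w').
Proof.
  intros hk hK. induction n as [|n IH]; intros w hw hl.
  - exists w. split; auto. split. lia. now apply lcoset_eq_refl.
  - destruct (le_lt_dec (length w) (length X * k)) as [hle|hlt].
    { exists w. split; auto. split; auto. now apply lcoset_eq_refl. }
    assert (hex : exists x, In x X /\ k <= count_occ carrier_eq_dec w x).
    { apply NNPP. intro hn. assert (h1 : total_count X w <= length X * (k - 1)).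
      { apply total_count_le. intros x hx. destruct (le_lt_dec k (count_occ carrier_eq_dec w x)).
        - exfalso; eauto.
        - lia. }
      assert (h2 := length_le_total_count X w hw). nia. }
    destruct hex as [x [hx hc]]. destruct (collect_letter w x k hw hx hc) as [r [hr [hlr he]]].
    destruct (IH r hr ltac:(lia)) as [w' [h1 [h2 h3]]]. exists w'. split; auto. split; auto.
    apply (lcoset_eq_trans _ _ _ _ N_subgroup he).
    apply (lcoset_eq_trans _ _ (prod r)); auto.
    unfold lcoset_eq. rewrite invMg, <- mulA.
    apply N_normal; auto using word_gen. apply (groupV N); auto.
Qed.

Theorem dietzmann : finite_index G N (gen S).
Proof.
  destruct (uniform_exponent N X N_subgroup X_torsion) as [k [hk hK]].
  exists (flat_map (fun n => map prod (words X n)) (seq 0 (Datatypes.S (length X * k)))). split.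
  - intros y hy. apply in_flat_map in hy as [n [_ hy]]. apply in_map_iff in hy as [w [<- hw]].
    apply word_gen. intros z hz. eapply words_letters; eauto.
  - intros d [w [hwS ->]].
    assert (hw1 : forall w, (forall y, In y w -> S y) ->
                  exists w1, word w1 /\ lcoset_eq N (prod w1) (prod w)).
    { induction w0 as [|s w0 IH]; intro hS.
      - exists []. split. intros _ []. now apply lcoset_eq_refl.
      - destruct (S_reps s (hS s (in_eq s w0))) as [x [hx hxs]].
        destruct IH as [w1 [hw1 he1]]. { intros; apply hS; now right. }
        exists (x :: w1). split. { intros z [<-|hz]; auto. }
        rewrite !prod_cons. apply lcoset_eq_mul; auto using word_gen. }
    destruct (hw1 w hwS) as [w1 [hw1' he1]].
    destruct (shorten_word k hk hK (length w1) w1 hw1' (le_n _)) as [w2 [hw2 [hl2 he2]]].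
    exists (prod w2). split.
    + apply in_flat_map. exists (length w2). split. apply in_seq; lia. apply in_map, in_words; auto.
    + apply (lcoset_eq_trans _ _ (prod w1)); auto. now apply lcoset_eq_sym.
Qed.

End Dietzmann.


(* Only finitely many conjugates A^g (g in D) occur, since the normaliser of A has finite index. *)
Lemma conjugates_finite A D : is_subgroup G A -> is_open (normaliser A) -> is_subgroup G D ->
  exists ds, (forall d, In d ds -> D d) /\
    forall g, D g -> exists d, In d ds /\ forall x, conjset A g x <-> conjset A d x.
Proof.
  intros sA hA sD.
  assert (hfi := open_subgroup_finite_index _ (normaliser_subgroup A) hA).
  destruct (finite_index_restrict _ full D (normaliser_subgroup A) sD hfi (fun _ _ => I))
    as [cs [hc1 hc2]].
  exists (map inv cs). split.
  - intros d hd. apply in_map_iff in hd as [c [<- hc]]. apply (groupV D); auto.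
  - intros g hg. destruct (hc2 (inv g) (groupV D _ sD hg)) as [c [hc [hn _]]].
    exists (inv c). split. now apply in_map.
    set (n := inv c ** inv g) in hn.
    assert (eg : g = inv n ** inv c) by (unfold n; rewrite invMg, !invgK, mulgK; reflexivity).
    intro x. rewrite eg, <- conjsetM.
    exact (conjset_normaliser A (inv n) _ (groupV _ _ (normaliser_subgroup A) hn)).
Qed.

Lemma conjugate_sets_finite (Ls : list (G -> Prop)) D :
  (forall L, In L Ls -> is_subgroup G L /\ is_open (normaliser L)) -> is_subgroup G D ->
  exists Cs : list (G -> Prop),
    (forall C, In C Cs -> exists L g, In L Ls /\ D g /\ C = conjset L g) /\
    (forall L g, In L Ls -> D g -> exists C, In C Cs /\ forall x, conjset L g x <-> C x).
Proof.
  intros hLs sD. induction Ls as [|L0 Ls IH].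
  - exists []. split. intros _ []. intros _ _ [].
  - destruct (hLs L0 (in_eq L0 Ls)) as [sL0 oL0].
    destruct (conjugates_finite L0 D sL0 oL0 sD) as [ds [hds1 hds2]].
    destruct IH as [Cs [hC1 hC2]]. { intros L hL. apply hLs. now right. }
    exists (map (conjset L0) ds ++ Cs). split.
    + intros C hC. apply in_app_or in hC as [hC|hC].
      * apply in_map_iff in hC as [d [<- hd]]. exists L0, d. split. now left. auto.
      * destruct (hC1 C hC) as [L [g [? [? ?]]]]. exists L, g. split. now right. auto.
    + intros L g [<-|hL] hg.
      * destruct (hds2 g hg) as [d [hd e]]. exists (conjset L0 d).
        split; auto. apply in_or_app. left. now apply in_map.
      * destruct (hC2 L g hL hg) as [C [? ?]]. exists C. split; auto. apply in_or_app; auto.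
Qed.

Lemma finite_index_meet_conjset H L s : is_subgroup G H -> is_subgroup G L ->
  (forall x, H x -> L x) -> finite_index G H L -> L s ->
  finite_index G (fun x => H x /\ conjset H s x) H.
Proof.
  intros sH sL hHL hfi hs.
  assert (h1 : finite_index G (conjset H s) L).
  { eapply finite_index_eq_r; [|exact (finite_index_conjset H L s hfi)].
    intro x. apply conjset_normaliser. now apply normaliser_self. }
  assert (h2 := finite_index_meet H (conjset H s) L sH (conjset_subgroup H s sH) hfi h1).
  assert (h3 := finite_index_restrict _ L H (subgroup_meet _ _ sH (conjset_subgroup H s sH))
                  sH h2 hHL).
  eapply finite_index_sub_l; [|exact h3]. simpl. tauto.
Qed.

Definition finite_orbital_overgroup H L :=
  orbital G L /\ subset H L /\ finite_index G H L.

Section Join.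
Variables H L1 L2 : G -> Prop.
Hypothesis H_subgroup : is_subgroup G H.
Hypothesis H_closed : is_closed H.
Hypothesis H_normaliser_open : is_open (normaliser H).
Hypothesis L1_subgroup : is_subgroup G L1.
Hypothesis L2_subgroup : is_subgroup G L2.
Hypothesis L1_normaliser_open : is_open (normaliser L1).
Hypothesis L2_normaliser_open : is_open (normaliser L2).
Hypothesis H_sub_L1 : subset H L1.
Hypothesis H_sub_L2 : subset H L2.
Hypothesis H_index_L1 : finite_index G H L1.
Hypothesis H_index_L2 : finite_index G H L2.

Let S x := L1 x \/ L2 x.
Let D := gen S.

Let S_inv : forall s, S s -> S (inv s).
Proof. intros s [hs|hs]; [left|right]; now apply groupV. Qed.
Let D_subgroup : is_subgroup G D := gen_subgroup S S_inv.
Let L1_sub_D : subset L1 D.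
Proof. intros x hx. apply mem_gen. now left. Qed.
Let L2_sub_D : subset L2 D.
Proof. intros x hx. apply mem_gen. now right. Qed.

Lemma join_commensurable g : D g -> finite_index G (fun x => H x /\ conjset H g x) H.
Proof.
  intros [w [hw ->]]. induction w as [|a w IH].
  - eapply finite_index_sub_l; [|exact (finite_index_refl H H_subgroup)].
    intros x hx. split; auto. now apply conjset1.
  - assert (IH' := IH (fun y hy => hw y (in_cons a y w hy))).
    assert (ha : finite_index G (fun x => H x /\ conjset H a x) H).
    { destruct (hw a (in_eq a w)) as [h|h];
        [apply (finite_index_meet_conjset H L1) | apply (finite_index_meet_conjset H L2)]; auto. }
    assert (h2 : finite_index G (fun x => conjset H (prod w) x /\ conjset H (a ** prod w) x)
                                (conjset H (prod w))).
    { eapply finite_index_sub_l; [|exact (finite_index_conjset _ _ (prod w) ha)].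
      intros x [k1 k2]. split. exact k1. now apply conjsetM. }
    exact (finite_index_meet_trans H _ _ H_subgroup (conjset_subgroup H _ H_subgroup)
             (conjset_subgroup H _ H_subgroup) IH' h2).
Qed.

Definition core x := forall g, D g -> conjset H g x.

Lemma core_sub x : core x -> H x.
Proof. intro hx. apply conjset1, hx, (group1 D), D_subgroup. Qed.

Lemma core_subgroup : is_subgroup G core.
Proof.
  split; [|split].
  - intros g _. apply (group1 (conjset H g)), conjset_subgroup, H_subgroup.
  - intros x y hx hy g hg. apply (groupM (conjset H g)); auto using conjset_subgroup.
  - intros x hx g hg. apply (groupV (conjset H g)); auto using conjset_subgroup.
Qed.

Lemma core_closed : is_closed core.
Proof. apply (closed_meet D (conjset H)). intros g _. now apply closed_conjset. Qed.

Lemma core_normal g x : D g -> core x -> core (x ^c g).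
Proof.
  intros hg hx g' hg'. rewrite <- (mulgKV g g').
  apply -> conjsetM. apply <- mem_conjset. apply hx.
  apply (groupM D); auto. now apply (groupV D).
Qed.

Lemma core_finite_index : finite_index G core H.
Proof.
  destruct (conjugates_finite H D H_subgroup H_normaliser_open D_subgroup) as [ds [hds hrep]].
  eapply finite_index_sub_l;
    [|exact (finite_index_meet_list H (conjset H) ds H_subgroup
               (fun d _ => conjset_subgroup H d H_subgroup)
               (fun d hd => join_commensurable d (hds d hd)))].
  intros x [hx hd] g hg. destruct (hrep g hg) as [d [hd' e]]. apply e. auto.
Qed.

Lemma core_finite_index_conjugate L g : (L = L1 \/ L = L2) -> D g ->
  finite_index G core (conjset L g).
Proof.
  intros hL hg.
  assert (hHL : subset H L /\ finite_index G H L) by (destruct hL as [->| ->]; auto).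
  assert (h := finite_index_conjset _ _ g (finite_index_trans core H L
                 ltac:(destruct hL as [->| ->]; auto) (proj1 hHL) core_finite_index (proj2 hHL))).
  eapply finite_index_sub_l; [|exact h]. intros x hx.
  rewrite <- (conjgKV x g). now apply core_normal.
Qed.

Lemma join_core_finite_index : finite_index G core D.
Proof.
  destruct (conjugate_sets_finite [L1; L2] D) as [Cs [hC1 hC2]]; auto.
  { intros L [<-|[<-|[]]]; auto. }
  assert (hCfi : forall C, In C Cs -> finite_index G core C /\ is_subgroup G C).
  { intros C hC. destruct (hC1 C hC) as [L [g [hL [hg ->]]]].
    assert (hL' : L = L1 \/ L = L2) by (destruct hL as [<-|[<-|[]]]; auto).
    split. now apply core_finite_index_conjugate.
    apply conjset_subgroup. destruct hL' as [-> | ->]; auto. }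
  destruct (finite_index_union core Cs (fun C hC => proj1 (hCfi C hC))) as [X [hX1 hX2]].
  apply (dietzmann core S X core_subgroup S_inv core_normal).
  - intros x hx. destruct (hX1 x hx) as [C [hC hx']].
    destruct (hC1 C hC) as [L [g [hL [hg ->]]]].
    rewrite <- (conjgKV x g). apply (groupJ D); auto.
    destruct hL as [<-|[<-|[]]]; [apply L1_sub_D | apply L2_sub_D]; auto.
  - intros x g hx hg. destruct (hX1 x hx) as [C [hC hx']].
    destruct (hC1 C hC) as [L [h [hL [hh ->]]]].
    destruct (hC2 L (h ** g) hL (groupM D _ _ D_subgroup hh hg)) as [C' [hC' e]].
    apply (hX2 C' (x ^c g) hC'), e. apply -> conjsetM. now apply <- mem_conjset.
  - intros x hx. destruct (hX1 x hx) as [C [hC hx']].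
    destruct (hCfi C hC) as [hfi sC]. exact (finite_index_power core C x core_subgroup sC hfi hx').
  - intros s hs.
    assert (hL : exists L, In L [L1; L2] /\ L s) by (destruct hs; [exists L1|exists L2]; simpl; auto).
    destruct hL as [L [hL hLs]].
    destruct (hC2 L one hL (group1 D D_subgroup)) as [C [hC e]].
    apply (hX2 C); auto. apply e, conjset1, hLs.
Qed.

Lemma join_closed : is_closed D.
Proof.
  destruct join_core_finite_index as [l [hl1 hl2]].
  apply (open_eq (closed_cosets core l core_closed)). intro x. split.
  - intros hn hx. now apply hn, hl2.
  - intros hn [y [hy hc]]. apply hn. rewrite <- (mulKVg y x).
    apply (groupM D); auto. apply L1_sub_D, H_sub_L1, core_sub, hc.
Qed.

Lemma join_normaliser_open : is_open (normaliser D).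
Proof.
  assert (hn : forall n, normaliser L1 n -> normaliser L2 n -> forall x, D x -> D (x ^c n)).
  { intros n h1 h2. apply gen_conj. intros s [k|k]; [left|right].
    - exact (proj1 (proj2 h1 s) k).
    - exact (proj1 (proj2 h2 s) k). }
  apply (open_subgroup_nbhd _ _ (normaliser_subgroup D)
           (open_inter _ _ _ L1_normaliser_open L2_normaliser_open)).
  - split; apply group1, normaliser_subgroup.
  - intros n [h1 h2]. split. exact I. intro x. split. apply hn; auto.
    intro hx. rewrite <- (conjgK x n). apply hn; auto; apply (groupV _ _ (normaliser_subgroup _)); auto.
Qed.

Lemma join_finite_orbital_overgroup :
  finite_orbital_overgroup H D /\ subset L1 D /\ subset L2 D.
Proof.
  split; [|split; auto]. split; [|split].
  - apply orbitalE. split; auto. split. exact join_closed. exact join_normaliser_open.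
  - intros x hx. apply L1_sub_D, H_sub_L1, hx.
  - eapply finite_index_sub_l; [exact core_sub | exact join_core_finite_index].
Qed.

End Join.


Lemma finite_orbital_overgroups_directed H L1 L2 : orbital G H ->
  finite_orbital_overgroup H L1 -> finite_orbital_overgroup H L2 ->
  exists L3, finite_orbital_overgroup H L3 /\ subset L1 L3 /\ subset L2 L3.
Proof.
  intros hH [o1 [s1 f1]] [o2 [s2 f2]].
  destruct (proj1 (orbitalE H) hH) as [sH [cH oH]].
  destruct (proj1 (orbitalE L1) o1) as [sL1 [_ oL1]].
  destruct (proj1 (orbitalE L2) o2) as [sL2 [_ oL2]].
  exists (gen (fun x => L1 x \/ L2 x)). now apply join_finite_orbital_overgroup.
Qed.

Lemma orbital_conjset L g : orbital G L -> orbital G (conjset L g).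
Proof.
  intro hL. destruct (proj1 (orbitalE L) hL) as [sL [cL oL]].
  apply (proj2 (orbitalE _)). split; [|split].
  - now apply conjset_subgroup.
  - now apply closed_conjset.
  - apply (open_subgroup_nbhd _ (fun n => normaliser L (n ^c inv g)) (normaliser_subgroup _)).
    + exact (open_conj _ (inv g) oL).
    + rewrite conj1g. apply group1, normaliser_subgroup.
    + intros n hn. split. exact I. intro z. unfold conjset.
      replace ((z ^c n) ^c inv g) with ((z ^c inv g) ^c (n ^c inv g)).
      * apply (proj2 hn).
      * rewrite <- !conjgM. f_equal. unfold conj. rewrite invgK, mulKg. reflexivity.
Qed.

Lemma finite_orbital_overgroup_conjset H L g : normaliser H g ->
  finite_orbital_overgroup H L -> finite_orbital_overgroup H (conjset L g).
Proof.
  intros hg [o [s f]]. split; [|split].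
  - now apply orbital_conjset.
  - intros z hz. apply s. now apply conjset_normaliser.
  - eapply finite_index_sub_l; [|exact (finite_index_conjset H L g f)].
    intros z hz. now apply conjset_normaliser in hz.
Qed.

Lemma sub_isolator H L : finite_orbital_overgroup H L -> subset L (isolator G H).
Proof. intros [o [s f]] x hx K _ hK. exact (hK L o s f x hx). Qed.

Lemma isolator_conj H g : normaliser H g -> forall x, isolator G H x -> isolator G H (x ^c g).
Proof.
  intros hg x hx K hK hc.
  destruct (proj1 (closed_subgroupE K) hK) as [sK cK].
  assert (hKg : conjset K (inv g) x).
  { apply hx.
    - apply closed_subgroupE. split. now apply conjset_subgroup. now apply closed_conjset.
    - intros L o s f y hy. unfold conjset. rewrite invgK.
      destruct (finite_orbital_overgroup_conjset H L g hg (Logic.conj o (Logic.conj s f))) as [o' [s' f']].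
      apply (hc _ o' s' f'). now apply mem_conjset. }
  unfold conjset in hKg. now rewrite invgK in hKg.
Qed.

Lemma max_closed_exists (P : (G -> Prop) -> Prop) L0 : max_closed_subgroups G ->
  (forall L, P L -> closed_subgroup G L) -> P L0 ->
  exists M, P M /\ forall L, P L -> subset M L -> subset L M.
Proof.
  intros hmax hP h0. apply NNPP. intro hn.
  assert (hex : forall M, exists L, P M -> P L /\ subset M L /\ ~ subset L M).
  { intro M. destruct (classic (P M)) as [hM|hM].
    - apply NNPP. intro hn2. apply hn. exists M. split; auto.
      intros L hL hs. apply NNPP. intro hns. apply hn2. exists L. auto.
    - exists M. intro; contradiction. }
  destruct (choice _ hex) as [f hf].
  set (C := fun n => Nat.iter n f L0).
  assert (hC : forall n, P (C n)) by (induction n; simpl; auto; apply hf, IHn).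
  destruct (hmax C) as [m hm].
  - intro n. apply hP, hC.
  - intro n. apply (hf (C n) (hC n)).
  - apply (hf (C m) (hC m)). intros x hx. apply (hm (S m) ltac:(lia) x), hx.
Qed.

Section Isolator.
Hypothesis max_condition : max_closed_subgroups G.
Variable H : G -> Prop.
Hypothesis H_orbital : orbital G H.

Lemma isolator_finite_orbital_overgroup : finite_orbital_overgroup H (isolator G H).
Proof.
  assert (hHH : finite_orbital_overgroup H H).
  { split; auto. split. intros x hx; exact hx. apply finite_index_refl, (proj1 (orbitalE H) H_orbital). }
  destruct (max_closed_exists (finite_orbital_overgroup H) H max_condition
              (fun L hL => proj1 (proj1 hL)) hHH) as [M [hM hMmax]].
  assert (eM : forall x, isolator G H x <-> M x).
  { intro x. split.
    - intro hx. apply hx. exact (proj1 (proj1 hM)). intros L o s f.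
      destruct (finite_orbital_overgroups_directed H L M H_orbital (Logic.conj o (Logic.conj s f)) hM)
        as [L3 [h3 [hs1 hs2]]].
      intros y hy. apply (hMmax L3 h3 hs2), hs1, hy.
    - apply sub_isolator, hM. }
  destruct hM as [o [s f]]. split; [|split].
  - destruct (proj1 (orbitalE M) o) as [sM [cM oM]]. apply (proj2 (orbitalE _)). split; [|split].
    + exact (subgroup_eq _ _ (fun x => iff_sym (eM x)) sM).
    + apply (open_eq cM). intro x. now rewrite eM.
    + apply (open_eq oM). intro n. unfold normaliser, normalizer_in.
      split; intros [_ h]; (split; [exact I|]); intro x; generalize (h x); rewrite ?eM; tauto.
  - intros x hx. apply eM, s, hx.
  - eapply finite_index_eq_r; [|exact f]. intro x. now rewrite eM.
Qed.

Theorem isolator_isolated_orbital : isolated_orbital G (isolator G H).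
Proof.
  destruct isolator_finite_orbital_overgroup as [oI [sHI fiI]].
  split. exact oI.
  intros H' o' s' [x [hx hnx]] hfi. apply hnx.
  apply (sub_isolator H H'); auto. split; auto. split.
  - intros y hy. apply s', sHI, hy.
  - apply finite_index_trans with (isolator G H); auto.
    apply (proj1 (orbitalE H') o').
Qed.

Theorem isolator_normal : normal G H -> normal G (isolator G H).
Proof.
  intros hn g x _ hx. apply isolator_conj; auto. split. exact I. intro y. split.
  - intro hy. now apply hn.
  - intro hy. rewrite <- (conjgK y g). now apply hn.
Qed.

End Isolator.


Lemma orbital_of_open_subgroup Hs K : is_subgroup G Hs -> is_closed Hs -> is_open Hs ->
  orbital_in G Hs K -> orbital G K.
Proof.
  intros sHs cHs oHs [[sK [hKHs [_ [V [hV eV]]]]] [_ [W [hW eW]]]].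
  apply (proj2 (orbitalE K)). split; [|split]; auto.
  - apply (open_eq (open_join _ _ cHs hV)). intro x.
    destruct (classic (Hs x)) as [hs|hs]; [rewrite <- (eV x hs)|]; split; intuition.
  - apply (open_subgroup_nbhd _ (fun x => Hs x /\ W x) (normaliser_subgroup K)
             (open_inter _ _ _ oHs hW)).
    + split. now apply (group1 Hs). apply (eW one (group1 Hs sHs)).
      split. now apply (group1 Hs). intro x. now rewrite conjg1.
    + intros n [hn hw]. destruct (proj2 (eW n hn) hw) as [_ h]. split. exact I. exact h.
Qed.

Lemma normal_meet_orbital_in Hs I : is_subgroup G Hs -> closed_subgroup G I -> normal G I ->
  orbital_in G Hs (fun y => I y /\ Hs y).
Proof.
  intros sHs hI nI. destruct (proj1 (closed_subgroupE I) hI) as [sI cI].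
  split; split.
  - now apply subgroup_meet.
  - split. now intros y [_ h].
    split. now intros y [h _]. exists (fun y => ~ I y). split. exact cI. intros y hy. tauto.
  - now intros y [h _].
  - exists (fun _ => True). split. apply open_full. intros g hg. split; intros _; auto.
    split; auto. intro z. split.
    + intros [h1 h2]. split. now apply nI. now apply (groupJ Hs).
    + intros [h1 h2]. rewrite <- (conjgK z g). split.
      * apply nI; [exact Logic.I | exact h1].
      * apply (groupJ Hs); auto. now apply (groupV Hs).
Qed.

Theorem orbitally_sound_finite_index_subgroup Hs : max_closed_subgroups G ->
  orbitally_sound G -> closed_subgroup G Hs -> finite_index G Hs full -> orbitally_sound_in G Hs.
Proof.
  intros hmax hsound hHs hfi K [oK hiso].
  destruct (proj1 (closed_subgroupE Hs) hHs) as [sHs cHs].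
  assert (KG := orbital_of_open_subgroup Hs K sHs cHs (closed_finite_index_open Hs sHs cHs hfi) oK).
  destruct oK as [[sK [hKHs _]] _].
  destruct (isolator_finite_orbital_overgroup hmax K KG) as [oI [sKI fiI]].
  assert (nI : normal G (isolator G K)) by exact (hsound _ (isolator_isolated_orbital hmax K KG)).
  destruct (proj1 (orbitalE _) oI) as [sI [cI _]].
  assert (hmeet : forall x, isolator G K x -> Hs x -> K x).
  { intros x hx hs. apply NNPP. intro hk. apply (hiso (fun y => isolator G K y /\ Hs y)).
    - apply normal_meet_orbital_in; auto. apply closed_subgroupE; auto.
    - intros y hy. auto.
    - eauto.
    - eapply finite_index_sub_l; [|exact (finite_index_restrict K (isolator G K)
        (fun y => isolator G K y /\ Hs y) sK (subgroup_meet _ _ sI sHs) fiI (fun y h => proj1 h))].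
      now intros y []. }
  intros g x hg hx. apply hmeet.
  - apply nI; [exact Logic.I | auto].
  - apply (groupJ Hs); auto.
Qed.

End ProfiniteGroupTheory.

Theorem lemma1p11 (G : ProfiniteGroup) (Hmax : max_closed_subgroups G) :
  (forall H : G -> Prop, orbital G H ->
     isolated_orbital G (isolator G H) /\ (normal G H -> normal G (isolator G H))) /\
  (orbitally_sound G -> forall H : G -> Prop,
     closed_subgroup G H -> finite_index G H full -> orbitally_sound_in G H).
Proof.
  split.
  - intros H hH. split.
    + exact (isolator_isolated_orbital G Hmax H hH).
    + exact (isolator_normal G H).
  - intros hsound H. exact (orbitally_sound_finite_index_subgroup G H Hmax hsound).
Qed.
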